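(* Let $n$ be a positive integer and let $G$ be a subgroup of $U(n)$. Then for every $\vec v \in S(n)$, $\lambda(G)$ divides $\#\mathrm{Orb}(G;\vec v)$.
   Context: $U(n)$ is the group (under matrix multiplication) of $2\times 2$ matrices $\begin{bmatrix} a & b \\ 0 & 1\end{bmatrix}$ with $a \in (\mathbb{Z}/n\mathbb{Z})^\times$ and $b \in \mathbb{Z}/n\mathbb{Z}$. $S(n)$ is the set of column vectors $\begin{bmatrix} j \\ 1\end{bmatrix}$ with $j \in \mathbb{Z}/n\mathbb{Z}$, on which $U(n)$ acts by matrix–vector multiplication: $\begin{bmatrix} a & b \\ 0 & 1\end{bmatrix}\begin{bmatrix} j \\ 1\end{bmatrix} = \begin{bmatrix} aj+b \\ 1\end{bmatrix}$. $\mathrm{Orb}(G;\vec v)$ is the orbit of $\vec v$ under $G$, and $\#X$ is the cardinality of $X$. $\lambda(G)$ is the minimum of $\#\mathrm{Orb}(G;\vec v)$ over $\vec v \in S(n)$. *)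

From mathcomp Require Import all_boot all_order all_algebra.
Set Implicit Arguments. Unset Strict Implicit. Unset Printing Implicit Defensive.

(* Throughout, the modulus is n = m.+1 (an arbitrary positive integer), and
   Z/nZ is represented by the ordinal type 'I_m.+1 with the Zp operations
   (Zp_add, Zp_mul, Zp0, Zp1), which are arithmetic mod m.+1 for every m
   (including n = 1). *)

(* An element [[a, b], [0, 1]] of the affine matrix group is encoded as (a, b). *)
Definition affmx (m : nat) : finType := ('I_m.+1 * 'I_m.+1)%type.

Definition inU (m : nat) (g : affmx m) : bool := coprime g.1 m.+1.

(* Matrix product [[a,b],[0,1]] * [[c,d],[0,1]] = [[a c, a d + b],[0,1]]. *)
Definition mulU (m : nat) (g h : affmx m) : affmx m :=
  (Zp_mul g.1 h.1, Zp_add (Zp_mul g.1 h.2) g.2).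

Definition idU (m : nat) : affmx m := (Zp1, Zp0).

Definition subgroupU (m : nat) (G : {set affmx m}) : Prop :=
  [/\ {in G, forall g, inU g},
      idU m \in G,
      {in G &, forall g h, mulU g h \in G} &
      {in G, forall g, exists2 h, h \in G & mulU g h = idU m}].

(* Action on S(n): [[a,b],[0,1]] [j;1] = [a j + b; 1]; a vector [j;1] is
   identified with j : Z/nZ. *)
Definition actU (m : nat) (g : affmx m) (j : 'I_m.+1) : 'I_m.+1 :=
  Zp_add (Zp_mul g.1 j) g.2.

Definition orbU (m : nat) (G : {set affmx m}) (j : 'I_m.+1) : {set 'I_m.+1} :=
  [set actU g j | g in G].

Definition lambdaU (m : nat) (G : {set affmx m}) : nat :=
  \big[minn/#|orbU G ord0|]_(j : 'I_m.+1) #|orbU G j|.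

From mathcomp Require Import all_boot all_order all_algebra all_fingroup all_solvable.
From mathcomp Require Import ring.
Set Implicit Arguments. Unset Strict Implicit. Unset Printing Implicit Defensive.

(* Write an element of G as g = (a, b), acting by x |-> a x + b, and let T = {b | (1, b) in G}
   be its translation subgroup.  The stabilizer of x embeds, through its linear parts, into the
   abelian unit group; call its image A_x.  By orbit-stabilizer #|Orb x| = #|G| / #|A_x|, so it
   suffices that #|A_v| divides #|A_w| whenever #|A_w| is largest, and this can be checked one
   prime p at a time, provided that for subgroups P <= A_x and Q <= A_y of coprime orders some z
   has P, Q <= A_z: join a Sylow p-subgroup of A_v with the p'-Hall subgroup of A_w.
   An element f = (a, b) of G has a in A_z iff a z + b - z lies in T.  Summing over Q the points
   of the orbit of x with linear parts in Q gives u with a u + #|Q| b - u in T whenever f fixes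
   x or a is in Q; symmetrically for w, y and P; a Bezout combination of u and w is the
   required z. *)

Lemma card_dvdn_max_of_coprime_join (gT : finGroupType) (I : Type) (S : I -> {group gT}) :
    (forall x y (P Q : {group gT}), coprime #|P| #|Q| -> P \subset S x -> Q \subset S y ->
       exists z, P \subset S z /\ Q \subset S z) ->
  forall v w, nilpotent (S w) -> (forall j, #|S j| <= #|S w|) -> #|S v| %| #|S w|.
Proof.
move=> join v w nilSw maxSw.
apply/dvdn_partP => // p; rewrite mem_primes => /and3P[p_pr _ _].
have [P sylP] := Sylow_exists p (S v).
have hallQ := nilpotent_pcore_Hall p^' nilSw; set Q := 'O_p^'(S w)%G in hallQ.
have copPQ : coprime #|P| #|Q|.
  exact: pnat_coprime (pHall_pgroup sylP) (pHall_pgroup hallQ).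
have [z [sPz sQz]] := join _ _ _ _ copPQ (pHall_sub sylP) (pHall_sub hallQ).
have le_PQ_Sw : #|P| * #|Q| <= #|S w|.
  rewrite -TI_cardMg ?coprime_TIg //; apply: leq_trans (maxSw z).
  by apply: subset_leq_card; rewrite mulG_subG sPz.
rewrite (card_Hall sylP) (card_Hall hallQ) -{2}(partnC p (cardG_gt0 (S w))) in le_PQ_Sw.
rewrite leq_pmul2r ?part_gt0 // !p_part (leq_exp2l _ _ (prime_gt1 p_pr)) in le_PQ_Sw.
by apply: dvdn_trans (dvdn_part p _); rewrite !p_part; exact: dvdn_exp2l.
Qed.

Import GRing.Theory.
Local Open Scope ring_scope.

Definition aff_mul (R : pzRingType) (g h : R * R) : R * R := (g.1 * h.1, g.1 * h.2 + g.2).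
Definition aff_act (R : pzRingType) (g : R * R) (x : R) : R := g.1 * x + g.2.
Definition defect (R : pzRingType) (k : nat) (f : R * R) (u : R) : R := f.1 * u + k%:R * f.2 - u.

Section AffineRing.
Variable R : comPzRingType.
Implicit Types (g h k : R * R) (x u w : R).

Lemma aff_mulA g h k : aff_mul g (aff_mul h k) = aff_mul (aff_mul g h) k.
Proof. by rewrite /aff_mul /=; congr pair; ring. Qed.

Lemma aff_mul1g g : aff_mul (1, 0) g = g.
Proof. by rewrite /aff_mul /= !mul1r addr0 -surjective_pairing. Qed.

Lemma aff_act_mul g h x : aff_act (aff_mul g h) x = aff_act g (aff_act h x).
Proof. by rewrite /aff_act /=; ring. Qed.

Lemma defect_bezout (k l p q : nat) f u w : (k * q = l * p + 1)%N ->
  defect 1 f (k%:R * u - l%:R * w) = k%:R * defect q f u - l%:R * defect p f w.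
Proof.
move=> /(congr1 (fun n => n%:R : R)); rewrite natrD !natrM => Ekq.
transitivity (k%:R * defect q f u - l%:R * defect p f w + f.2 * (1 + l%:R * p%:R - k%:R * q%:R)).
  by rewrite /defect; ring.
by rewrite Ekq; ring.
Qed.

End AffineRing.

Section AffineSubgroup.
Variable R : finComUnitRingType.
Variable G : {set R * R}.
Hypothesis G_unit : {in G, forall g, g.1 \is a GRing.unit}.
Hypothesis G1 : (1, 0) \in G.
Hypothesis GM : {in G &, forall g h, aff_mul g h \in G}.
Hypothesis GV : {in G, forall g, exists2 h, h \in G & aff_mul g h = (1, 0)}.

Definition transl (b : R) := (1, b) \in G.

Lemma aff_mulV g : g \in G -> exists2 h, h \in G & aff_mul g h = (1, 0) /\ aff_mul h g = (1, 0).
Proof.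
move=> gG; have [h hG [e1 e2]] := GV gG; exists h => //; split; first by rewrite /aff_mul e1 e2.
rewrite /aff_mul (mulrC h.1) e1; congr pair.
suff -> : h.1 * g.2 + h.2 = h.1 * (g.1 * h.2 + g.2) by rewrite e2 mulr0.
by rewrite mulrDr mulrA (mulrC h.1 g.1) e1 mul1r addrC.
Qed.

Lemma aff_mul_inj g : g \in G -> injective (aff_mul g).
Proof.
move=> gG h k ehk; have [g' _ [_ g'g]] := aff_mulV gG.
by rewrite -(aff_mul1g h) -(aff_mul1g k) -g'g -!aff_mulA ehk.
Qed.

Lemma transl_sub g h : g \in G -> h \in G -> g.1 = h.1 -> transl (g.2 - h.2).
Proof.
move=> gG hG e; have [h' h'G [[e1 e2] _]] := aff_mulV hG.
have := GM gG h'G; rewrite /aff_mul /transl e e1; congr (_ \in G); congr pair.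
by rewrite addrC -[h.1 * h'.2](addrK h.2) e2 add0r.
Qed.

Lemma translD a b : transl a -> transl b -> transl (a + b).
Proof. by move=> ha hb; have := GM hb ha; rewrite /aff_mul /= !mul1r. Qed.

Lemma translMn k a : transl a -> transl (k%:R * a).
Proof.
move=> ha; elim: k => [|k IHk]; first by rewrite mul0r.
by rewrite -natr1 mulrDl mul1r translD.
Qed.

Lemma translB a b : transl a -> transl b -> transl (a - b).
Proof. by move=> ha hb; apply: (transl_sub ha hb). Qed.

Lemma transl_sum (I : finType) (P : pred I) F :
  (forall i, P i -> transl (F i)) -> transl (\sum_(i | P i) F i).
Proof. by move=> hF; apply: (big_ind transl) => //; exact: translD. Qed.

Lemma aff_shift a b c : (a, b) \in G -> transl c -> (a, b + c) \in G.
Proof. by move=> abG hc; have := GM hc abG; rewrite /aff_mul /= !mul1r addrC. Qed.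

Definition aff_orbit x := [set aff_act g x | g in G].
Definition aff_stab x := [set g in G | aff_act g x == x].

Lemma card_aff_orbit_fiber x y : y \in aff_orbit x ->
  #|[set g in G | aff_act g x == y]| = #|aff_stab x|.
Proof.
case/imsetP=> g0 g0G ->; rewrite -[#|aff_stab x|](card_imset _ (aff_mul_inj g0G)); apply: eq_card => g.
apply/idP/imsetP => [/setIdP[gG /eqP gx] | [h /setIdP[hG /eqP hx] ->]]; last first.
  by rewrite inE GM //= aff_act_mul hx.
have [g0' g0'G [g0g0' g0'g0]] := aff_mulV g0G.
exists (aff_mul g0' g); last by rewrite aff_mulA g0g0' aff_mul1g.
by rewrite inE GM //= aff_act_mul gx -aff_act_mul g0'g0 /aff_act /= mul1r addr0.
Qed.

Lemma card_aff_orbit_stab x : #|G| = (#|aff_orbit x| * #|aff_stab x|)%N.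
Proof.
rewrite -sum1_card (partition_big (fun g => aff_act g x) (mem (aff_orbit x))); last first.
  by move=> g gG; apply/imsetP; exists g.
rewrite -sum_nat_const; apply: eq_bigr => y xGy.
by rewrite -(card_aff_orbit_fiber xGy) -sum1_card; apply: eq_bigl => g; rewrite inE.
Qed.

Definition stab_lin x : {set {unit R}} :=
  [set a : {unit R} | [exists g in G, (g.1 == val a) && (aff_act g x == x)]].

Lemma stab_linP x (a : {unit R}) :
  reflect (exists2 g, g \in G & g.1 = val a /\ aff_act g x = x) (a \in stab_lin x).
Proof.
rewrite inE; apply: (iffP existsP) => [[g /and3P[gG /eqP g1 /eqP gx]] | [g gG [g1 gx]]].
  by exists g.
by exists g; rewrite gG g1 gx !eqxx.
Qed.

Lemma stab_lin_group_set x : group_set (stab_lin x).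
Proof.
apply/group_setP; split.
  by apply/stab_linP; exists (1, 0) => //; rewrite /aff_act /= mul1r addr0.
move=> a b /stab_linP[g gG [g1 gx]] /stab_linP[h hG [h1 hx]]; apply/stab_linP.
by exists (aff_mul g h); rewrite ?GM // aff_act_mul hx gx /= g1 h1.
Qed.
Canonical stab_lin_group x := Group (stab_lin_group_set x).

Lemma stab_lin_abelian x : abelian (stab_lin x).
Proof. by apply/centsP => a _ b _; apply: val_inj; rewrite /= mulrC. Qed.

Lemma card_stab_lin x : #|aff_stab x| = #|stab_lin x|.
Proof.
pose lin (g : R * R) : {unit R} := insubd (1%g : {unit R}) g.1.
have linE g : g \in G -> val (lin g) = g.1 by move=> gG; rewrite insubdK // unfold_in G_unit.
rewrite -(card_in_imset (f := lin)); last first.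
  move=> g h /setIdP[gG /eqP gx] /setIdP[hG /eqP hx] /(congr1 val); rewrite !linE // => gh1.
  rewrite [g]surjective_pairing [h]surjective_pairing -gh1; congr pair.
  by apply: (addrI (g.1 * x)); rewrite [LHS]gx [in RHS]gh1 [RHS]hx.
apply: eq_card => a; apply/imsetP/stab_linP => [[g /setIdP[gG /eqP gx] ->] | [g gG [g1 gx]]].
  by exists g; rewrite ?linE.
by exists g; [rewrite inE gG gx eqxx | apply: val_inj; rewrite linE].
Qed.

Lemma stab_lin_defect f z (a : {unit R}) :
  f \in G -> f.1 = val a -> transl (defect 1 f z) -> a \in stab_lin z.
Proof.
move=> fG f1 hz; apply/stab_linP; exists (f.1, f.2 - defect 1 f z).
  by apply: aff_shift; rewrite -?surjective_pairing // -[- _]add0r translB.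
by split => //; rewrite /aff_act /defect /=; ring.
Qed.

Definition lin_rep (c : {unit R}) : R * R := odflt (1, 0) [pick g in G | g.1 == val c].

Lemma lin_repP c : (exists2 g, g \in G & g.1 = val c) -> lin_rep c \in G /\ (lin_rep c).1 = val c.
Proof.
case=> g gG g1; rewrite /lin_rep; case: pickP => [h /andP[hG /eqP ->] | /(_ g)] //=.
by rewrite gG g1 eqxx.
Qed.

Definition orbit_sum (Q : {set {unit R}}) x := \sum_(c in Q) aff_act (lin_rep c) x.

Section Averaging.
Variable Q : {group {unit R}}.
Hypothesis Q_lin : forall c, c \in Q -> exists2 g, g \in G & g.1 = val c.

Lemma defect_orbit_sum f x : defect #|Q| f (orbit_sum Q x) =
  \sum_(c in Q) (aff_act f (aff_act (lin_rep c) x) - aff_act (lin_rep c) x).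
Proof.
rewrite sumrB /defect; congr (_ - _).
by rewrite {2}/aff_act big_split /= -mulr_sumr sumr_const mulr_natl.
Qed.

Lemma transl_defect_fix f x : f \in G -> aff_act f x = x ->
  transl (defect #|Q| f (orbit_sum Q x)).
Proof.
move=> fG fx; rewrite defect_orbit_sum; apply: transl_sum => c cQ.
have [rG _] := lin_repP (Q_lin cQ); set r := lin_rep c.
have := transl_sub (GM fG rG) (GM rG fG) (mulrC _ _); congr transl.
have f2 : f.2 = x - f.1 * x by rewrite -{1}fx /aff_act addrAC subrr add0r.
by rewrite /aff_act /aff_mul /= f2; ring.
Qed.

(* Composing with [f] permutes the linear parts [c] in [Q] as [c |-> f.1 * c]. *)
Lemma transl_defect_lin x f c0 : f \in G -> c0 \in Q -> f.1 = val c0 ->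
  transl (defect #|Q| f (orbit_sum Q x)).
Proof.
move=> fG c0Q f1; rewrite defect_orbit_sum sumrB.
rewrite [X in _ - X](reindex_inj (mulgI c0)) [X in _ - X](eq_bigl (mem Q)) /=; last first.
  by move=> c; rewrite /= groupMl.
rewrite -sumrB; apply: transl_sum => c cQ.
have [rG r1] := lin_repP (Q_lin cQ); have [r'G r'1] := lin_repP (Q_lin (groupM c0Q cQ)).
have := transl_sub (GM fG rG) r'G; rewrite /aff_mul /= r1 r'1 f1 => /(_ erefl).
by congr transl; rewrite /aff_act r1 r'1 f1 /=; ring.
Qed.

End Averaging.

Lemma stab_lin_coprime_join x y (P Q : {group {unit R}}) : coprime #|P| #|Q| ->
  P \subset stab_lin x -> Q \subset stab_lin y ->
  exists z, P \subset stab_lin z /\ Q \subset stab_lin z.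
Proof.
move=> copPQ sPx sQy.
have lin_of (S : {group {unit R}}) v : S \subset stab_lin v ->
    forall c, c \in S -> exists2 g, g \in G & g.1 = val c.
  by move=> sSv c /(subsetP sSv)/stab_linP[g gG [g1 _]]; exists g.
have [km kn Ebez _] := @egcdnP #|Q| #|P| (cardG_gt0 Q).
rewrite coprime_sym in copPQ; rewrite (eqP copPQ) in Ebez.
exists (km%:R * orbit_sum Q x - kn%:R * orbit_sum P y).
have transl_z f : f \in G -> transl (defect #|Q| f (orbit_sum Q x)) ->
    transl (defect #|P| f (orbit_sum P y)) ->
    transl (defect 1 f (km%:R * orbit_sum Q x - kn%:R * orbit_sum P y)).
  by move=> fG hx hy; rewrite (defect_bezout _ _ _ Ebez) translB ?translMn.
split; apply/subsetP => a aS.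
  have /stab_linP[f fG [f1 fx]] := subsetP sPx a aS.
  apply: (stab_lin_defect fG f1); apply: transl_z => //.
    exact (transl_defect_fix (lin_of Q _ sQy) fG fx).
  exact (transl_defect_lin (lin_of P _ sPx) y fG aS f1).
have /stab_linP[f fG [f1 fy]] := subsetP sQy a aS.
apply: (stab_lin_defect fG f1); apply: transl_z => //.
  exact (transl_defect_lin (lin_of Q _ sQy) x fG aS f1).
exact (transl_defect_fix (lin_of P _ sPx) fG fy).
Qed.

Lemma card_aff_orbit_dvdn_min v w : (forall j, #|aff_orbit w| <= #|aff_orbit j|)%N ->
  (#|aff_orbit w| %| #|aff_orbit v|)%N.
Proof.
move=> min_w.
have orbit_stab j : #|G| = (#|aff_orbit j| * #|stab_lin j|)%N.
  by rewrite (card_aff_orbit_stab j) card_stab_lin.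
have orbit_w_gt0 : (0 < #|aff_orbit w|)%N.
  by apply/card_gt0P; exists (aff_act (1, 0) w); apply/imsetP; exists (1, 0).
have max_w j : (#|stab_lin j| <= #|stab_lin w|)%N.
  rewrite -(leq_pmul2l orbit_w_gt0) -orbit_stab (orbit_stab j).
  by rewrite leq_pmul2r ?cardG_gt0 ?min_w.
have := card_dvdn_max_of_coprime_join stab_lin_coprime_join v (abelian_nil (stab_lin_abelian w)) max_w.
case/dvdnP=> k Ew; rewrite -(dvdn_pmul2r (cardG_gt0 (stab_lin_group v))) -orbit_stab.
by rewrite (orbit_stab w) Ew mulnCA dvdn_mull.
Qed.

End AffineSubgroup.

Local Close Scope ring_scope.

Lemma lambdaU_arg_min (m : nat) (G : {set affmx m}) :
  lambdaU G = #|orbU G [arg min_(j < ord0) #|orbU G j|]|.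
Proof.
case: arg_minnP => // w _ min_w; apply/anti_leq.
rewrite /lambdaU -minEnat -!leEnat Order.TotalTheory.bigmin_le /=.
by apply/Order.TotalTheory.bigmin_geP; split => [|j _]; rewrite leEnat min_w.
Qed.

Theorem proposition2p2 (m : nat) (G : {set affmx m}) :
  subgroupU G -> forall v : 'I_m.+1, lambdaU G %| #|orbU G v|.
Proof.
case=> G_unit G1 GM GV v; rewrite lambdaU_arg_min.
case: arg_minnP => // w _ min_w.
case: m G G_unit G1 GM GV v w min_w => [|k] G G_unit G1 GM GV v w min_w.
  (* n = 1: 'Z_1 is not a ring, but all orbits are singletons. *)
  have orbit1 j : #|orbU G j| = 1.
    apply/eqP; rewrite eqn_leq (leq_trans (max_card _)) ?card_ord //.
    by apply/card_gt0P; exists (actU (idU 0) j); apply: imset_f.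
  by rewrite !orbit1.
have unitG : {in G, forall g : 'Z_k.+2 * 'Z_k.+2, g.1 \is a GRing.unit}.
  by move=> g /G_unit cop_g; rewrite -[g.1]natr_Zp unitZpE // coprime_sym.
exact: (card_aff_orbit_dvdn_min unitG G1 GM GV _ (fun j => min_w j isT)).
Qed.
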